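(* There is a reference point $(r_1,r_2)$ with $r_1\le -1$ and $r_2\le -1$ such that SEMO with the hypervolume contribution (w.r.t. this reference point) and NMUAR parent selection has a positive probability of stagnating, i.e. of never covering the whole Pareto front, on \textsc{OneMinMax} and on \textsc{LOTZ}.
   Context: Search space $\{0,1\}^n$; objectives maximised. $\textsc{OneMinMax}(x)=(\sum_ix_i,\,n-\sum_ix_i)$ (every point Pareto optimal). $\textsc{LOTZ}(x)=(\mathrm{LO}(x),\mathrm{TZ}(x))$, number of leading ones and trailing zeros; Pareto set $\{1^i0^{n-i}\}$. Dominance: $y$ dominates $x$ if $f_i(y)\ge f_i(x)$ for all $i$, strictly for some $i$; weakly dominates if $\ge$ in all. SEMO with diversity-based parent selection: start with uniform random $s$, $P=\{s\}$. Each iteration: compute the diversity score of each $x\in P$ w.r.t. $P$; choose a parent by the selection mechanism; create $s'$ by flipping one uniformly random bit; if $s'$ is not dominated by any member of $P$, add it and remove all members weakly dominated by $s'$. NMUAR: if the individuals of $P$ do not all have the same score, discard all with minimum score and select uniformly at random among the remaining; otherwise select uniformly at random from $P$. HVC with reference point $(r_1,r_2)$: sort population by increasing $f_1$ as $x_1,\dots,x_\mu$, set $f_1(x_0)=r_1$, $f_2(x_{\mu+1})=r_2$, $\mathrm{HVC}(x_i,P)=(f_1(x_i)-f_1(x_{i-1}))(f_2(x_i)-f_2(x_{i+1}))$. *)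

(* Probabilities are rationals (all quantities here are rational). *)
From HB Require Import structures.
From mathcomp Require Import all_boot all_order all_algebra.
Set Implicit Arguments. Unset Strict Implicit. Unset Printing Implicit Defensive.
Import Order.TTheory GRing.Theory Num.Theory.

Definition bs (n : nat) := {ffun 'I_n -> bool}.
Definition obj := (nat * nat)%type.

Definition dominates (a b : obj) : bool :=
  [&& (b.1 <= a.1)%N, (b.2 <= a.2)%N & ((b.1 < a.1)%N || (b.2 < a.2)%N)].
Definition wdominates (a b : obj) : bool := (b.1 <= a.1)%N && (b.2 <= a.2)%N.

Definition ones n (x : bs n) : nat := (\sum_(i < n) (x i : nat))%N.
Definition OneMinMax n (x : bs n) : obj := (ones x, n - ones x)%N.

Definition LO n (x : bs n) : nat :=
  (\max_(k < n.+1 | [forall j : 'I_n, (j < k)%N ==> x j]) k)%N.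
Definition TZ n (x : bs n) : nat :=
  (\max_(k < n.+1 | [forall j : 'I_n, (n - k <= j)%N ==> ~~ x j]) k)%N.
Definition LOTZ n (x : bs n) : obj := (LO x, TZ x).

Definition flip n (x : bs n) (i : 'I_n) : bs n :=
  [ffun j => if j == i then ~~ x j else x j].

Definition pareto_set n (f : bs n -> obj) : {set bs n} :=
  [set x | [forall y, ~~ dominates (f y) (f x)]].
Definition covers n (f : bs n -> obj) (P : {set bs n}) : bool :=
  [forall y in pareto_set f, [exists x in P, f x == f y]].

Local Open Scope ring_scope.

Definition sorted_pop n (f : bs n -> obj) (P : {set bs n}) : seq (bs n) :=
  sort (fun x y => ((f x).1 <= (f y).1)%N) (enum P).

Definition HVC n (f : bs n -> obj) (r1 r2 : rat) (P : {set bs n}) (x : bs n) : rat :=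
  let s := sorted_pop f P in
  let i := index x s in
  let prev := if i is i'.+1 then ((f (nth x s i')).1)%:R else r1 in
  let next := if (i.+1 < size s)%N then ((f (nth x s i.+1)).2)%:R else r2 in
  (((f x).1)%:R - prev) * (((f x).2)%:R - next).

Definition nmuar_pool n (score : bs n -> rat) (P : {set bs n}) : {set bs n} :=
  if [forall x in P, forall y in P, score x == score y] then P
  else [set x in P | [exists y in P, score y < score x]].
Definition nmuar_sel n (score : bs n -> rat) (P : {set bs n}) (x : bs n) : rat :=
  if x \in nmuar_pool score P then 1 / (#|nmuar_pool score P|)%:R else 0.

Definition update n (f : bs n -> obj) (P : {set bs n}) (s' : bs n) : {set bs n} :=
  if [exists y in P, dominates (f y) (f s')] then P
  else s' |: [set y in P | ~~ wdominates (f s') (f y)].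

Definition step n (f : bs n -> obj) (r1 r2 : rat) (P Q : {set bs n}) : rat :=
  \sum_(x in P) nmuar_sel (HVC f r1 r2 P) P x *
     \sum_(i < n) (1 / n%:R) * (nat_of_bool (update f P (flip x i) == Q))%:R.

Definition init n (P : {set bs n}) : rat :=
  \sum_(s : bs n) (1 / (2 ^ n)%N%:R) * (nat_of_bool (P == [set s]))%:R.

(* uncov t P = probability that the population after t iterations is P and
   that the Pareto front was not covered at any of the times 0, ..., t *)
Fixpoint uncov n (f : bs n -> obj) (r1 r2 : rat) (t : nat) (P : {set bs n}) : rat :=
  match t with
  | 0 => init P * (nat_of_bool (~~ covers f P))%:R
  | t'.+1 => (nat_of_bool (~~ covers f P))%:R *
             \sum_(Q : {set bs n}) uncov f r1 r2 t' Q * step f r1 r2 Q P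
  end.

Definition not_covered_upto n (f : bs n -> obj) (r1 r2 : rat) (t : nat) : rat :=
  \sum_(P : {set bs n}) uncov f r1 r2 t P.

(* positive probability of never covering the Pareto front: the (decreasing)
   probabilities of not covering up to time t are bounded below by some eps > 0,
   i.e. their limit -- the probability of never covering -- is positive *)
Definition stagnates_with_pos_prob n (f : bs n -> obj) (r1 r2 : rat) : Prop :=
  exists eps : rat, 0 < eps /\ forall t : nat, eps <= not_covered_upto f r1 r2 t.

From mathcomp Require Import all_boot all_order all_algebra.
From mathcomp Require Import lra zify.
Import Order.TTheory GRing.Theory Num.Theory.

(* Take the reference point (-(n+1), -1).  With probability 2^-n SEMO starts
   in 0^n.  As long as the population is {0^n} or {0^n, y} with f y = (1, n-1),
   the hypervolume contributions are n+1 for 0^n and n for y, so NMUAR always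
   selects 0^n; each child of 0^n either is such a y, which then replaces the
   previous one, or is dominated by 0^n.  Hence the population stays in this
   family forever, and no member of the family reaches the Pareto optimal
   value (n, 0) of 1^n. *)

Set Implicit Arguments.
Unset Strict Implicit.
Unset Printing Implicit Defensive.

Local Open Scope ring_scope.

Lemma ler_sum_subset (R : numDomainType) (I : finType) (P : pred I) (F : I -> R) :
  (forall i, 0 <= F i) -> \sum_(i | P i) F i <= \sum_i F i.
Proof. by move=> F_ge0; rewrite [leRHS](bigID P) /= lerDl sumr_ge0. Qed.

Section Absorbing.

Variables (n : nat) (f : bs n -> obj) (r1 r2 : rat).

Lemma nmuar_sel_ge0 (score : bs n -> rat) P x : 0 <= nmuar_sel score P x.
Proof. by rewrite /nmuar_sel; case: ifP; rewrite // div1r invr_ge0. Qed.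

Lemma step_ge0 Q P : 0 <= step f r1 r2 Q P.
Proof.
apply: sumr_ge0 => x _; rewrite mulr_ge0 ?nmuar_sel_ge0 ?sumr_ge0 // => i _.
by rewrite mulr_ge0 // div1r invr_ge0.
Qed.

Lemma init_ge0 (P : {set bs n}) : 0 <= init P.
Proof. by apply: sumr_ge0 => s _; rewrite mulr_ge0 // div1r invr_ge0. Qed.

Lemma uncov_ge0 t P : 0 <= uncov f r1 r2 t P.
Proof.
elim: t P => [|t IH] P /=; first by rewrite mulr_ge0 ?init_ge0.
by rewrite mulr_ge0 ?sumr_ge0 // => Q _; rewrite mulr_ge0 ?IH ?step_ge0.
Qed.

Variable S : pred {set bs n}.
Hypothesis S_uncovered : forall P, S P -> ~~ covers f P.
Hypothesis S_closed : forall Q, S Q -> \sum_(P | S P) step f r1 r2 Q P = 1.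

Lemma init_mass_le_uncov t :
  \sum_(P | S P) init P <= \sum_(P | S P) uncov f r1 r2 t P.
Proof.
elim: t => [|t IH] /=.
  by apply: ler_sum => P /S_uncovered /negbTE ->; rewrite mulr1.
have step_mass Q : S Q -> uncov f r1 r2 t Q =
    \sum_(P | S P) uncov f r1 r2 t Q * step f r1 r2 Q P.
  by move=> /S_closed mass1; rewrite -mulr_sumr mass1 mulr1.
apply: (le_trans IH); rewrite (eq_bigr _ step_mass) exchange_big /=.
apply: ler_sum => P /S_uncovered /negbTE ->; rewrite mul1r.
by apply: ler_sum_subset => Q; rewrite mulr_ge0 ?uncov_ge0 ?step_ge0.
Qed.

Lemma stagnates_of_absorbing :
  0 < \sum_(P | S P) init P -> stagnates_with_pos_prob f r1 r2.
Proof.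
move=> mass_gt0; exists (\sum_(P | S P) init P); split=> // t.
apply: (le_trans (init_mass_le_uncov t)).
by apply: ler_sum_subset => P; apply: uncov_ge0.
Qed.

End Absorbing.

Lemma init_set1 n (s : bs n) : init [set s] = 1 / (2 ^ n)%N%:R.
Proof.
rewrite /init (bigD1 s) //= eqxx mulr1 big1 ?addr0 // => s' s'_neq_s.
by rewrite (inj_eq set1_inj) eq_sym (negbTE s'_neq_s) mulr0.
Qed.

Section Selection.

Variables (n : nat) (score : bs n -> rat).

Lemma nmuar_pool_set1 a : nmuar_pool score [set a] = [set a].
Proof.
rewrite /nmuar_pool; case: ifP => // /negP[].
by apply/forall_inP => x /set1P-> ; apply/forall_inP => y /set1P->.
Qed.

Lemma nmuar_pool_pair a b :
  score b < score a -> nmuar_pool score [set a; b] = [set a].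
Proof.
move=> lt_ba; rewrite /nmuar_pool ifF; last first.
  apply/negP => /forall_inP/(_ a (set21 a b))/forall_inP/(_ b (set22 a b)).
  by rewrite (gt_eqF lt_ba).
apply/setP => x; rewrite !inE; case: (eqVneq x a) => [->|x_neq_a] /=.
  by apply/exists_inP; exists b; rewrite ?set22.
case: (eqVneq x b) => [->|] //=; apply/exists_inP => -[y].
by rewrite !inE => /orP[]/eqP->; [move/(lt_trans lt_ba); rewrite ltxx | rewrite ltxx].
Qed.

Lemma sum_nmuar_sel_pool1 (P : {set bs n}) a (g : bs n -> rat) :
  a \in P -> nmuar_pool score P = [set a] ->
  \sum_(x in P) nmuar_sel score P x * g x = g a.
Proof.
move=> aP pool_a; rewrite (bigD1 a) //= big1 ?addr0 => [|x /andP[_ x_neq_a]].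
  by rewrite /nmuar_sel pool_a set11 cards1 divr1 mul1r.
by rewrite /nmuar_sel pool_a inE (negbTE x_neq_a) mul0r.
Qed.

End Selection.

Section PairContributions.

Variables (n : nat) (f : bs n -> obj) (r1 r2 : rat) (a b : bs n).
Hypothesis lt_ab : ((f a).1 < (f b).1)%N.

Let neq_ab : a != b.
Proof. by apply: contraTneq lt_ab => ->; rewrite ltnn. Qed.

Lemma sorted_pop_pair : sorted_pop f [set a; b] = [:: a; b].
Proof.
have fst_le_total : total (fun x y : bs n => (f x).1 <= (f y).1)%N.
  by move=> x y; apply: leq_total.
have fst_le_trans : transitive (fun x y : bs n => (f x).1 <= (f y).1)%N.
  by move=> y x z; apply: leq_trans.
have -> : sorted_pop f [set a; b] = sort (fun x y => (f x).1 <= (f y).1)%N [:: a; b].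
  apply/perm_sort_inP; [exact: in2W | exact: in3W | |].
  - move=> x y; rewrite !mem_enum !inE => /orP[]/eqP-> /orP[]/eqP-> //= /andP[].
    + by move=> _; rewrite leqNgt lt_ab.
    + by rewrite leqNgt lt_ab.
  - apply: uniq_perm; rewrite ?enum_uniq //= ?inE ?neq_ab // => x.
    by rewrite mem_enum !inE.
by apply: sorted_sort => //=; rewrite ltnW.
Qed.

Lemma HVC_pair_l :
  HVC f r1 r2 [set a; b] a = ((f a).1%:R - r1) * ((f a).2%:R - (f b).2%:R).
Proof. by rewrite /HVC sorted_pop_pair /= eqxx. Qed.

Lemma HVC_pair_r :
  HVC f r1 r2 [set a; b] b = ((f b).1%:R - (f a).1%:R) * ((f b).2%:R - r2).
Proof. by rewrite /HVC sorted_pop_pair /= ifN // eqxx. Qed.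

End PairContributions.

Definition zeros n : bs n := [ffun => false].

Section Trap.

Variables (n : nat) (f : bs n -> obj).
Hypothesis n_gt0 : (0 < n)%N.
Hypothesis f_zeros : f (zeros n) = (0, n)%N.

Definition trapped (P : {set bs n}) : bool :=
  (P == [set zeros n]) ||
  [exists y, (f y == (1, n - 1)%N) && (P == [set zeros n; y])].

Lemma mem_trapped P : trapped P ->
  zeros n \in P /\ forall w, w \in P -> w = zeros n \/ f w = (1, n - 1)%N.
Proof.
case/orP => [/eqP-> | /existsP[y /andP[/eqP f_y /eqP->]]].
  by split=> [|w /set1P]; [rewrite set11 | left].
by split=> [|w]; rewrite ?set21 // => /set2P[]->; [left | right].
Qed.

Lemma update_trapped Q s : f s = (1, n - 1)%N \/ dominates (0, n)%N (f s) ->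
  trapped Q -> trapped (update f Q s).
Proof.
move=> f_s Q_trapped; have [zeros_Q Q_vals] := mem_trapped Q_trapped.
rewrite /update; case: f_s => [f_s | dom_s].
  rewrite ifN; last first.
    apply/exists_inP => -[y /Q_vals[]->];
      by rewrite ?f_zeros f_s /dominates /= ?ltnn ?andbF.
  have -> : [set y in Q | ~~ wdominates (f s) (f y)] = [set zeros n].
    apply/setP => y; rewrite !inE; case: (eqVneq y (zeros n)) => [->|y_neq].
      by rewrite zeros_Q f_zeros f_s /wdominates /= -ltnNge; lia.
    apply: negbTE; rewrite negb_and negbK; case: (boolP (y \in Q)) => //= /Q_vals.
    by case=> [y_eq|->]; [rewrite y_eq eqxx in y_neq | rewrite f_s /wdominates /= !leqnn].
  by rewrite setUC; apply/orP; right; apply/existsP; exists s; rewrite f_s !eqxx.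
by rewrite ifT //; apply/exists_inP; exists (zeros n); rewrite ?f_zeros.
Qed.

Lemma trapped_uncovered P w :
  w \in pareto_set f -> f w != (0, n)%N -> f w != (1, n - 1)%N ->
  trapped P -> ~~ covers f P.
Proof.
move=> w_pareto w_neq0 w_neq1 /mem_trapped[_ P_vals].
apply/forall_inP => /(_ w w_pareto)/exists_inP[x /P_vals[->|f_x] /eqP f_xw].
  by rewrite -f_xw f_zeros eqxx in w_neq0.
by rewrite -f_xw f_x eqxx in w_neq1.
Qed.

Variables (r1 r2 : rat).

(* In {0^n, y} the contributions are -r1 for 0^n and (n-1) - r2 for y. *)
Hypothesis zeros_wins : (n - 1)%N%:R - r2 < - r1.

Lemma nmuar_pool_trapped P :
  trapped P -> nmuar_pool (HVC f r1 r2 P) P = [set zeros n].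
Proof.
case/orP => [/eqP-> | /existsP[y /andP[/eqP f_y /eqP->]]].
  exact: nmuar_pool_set1.
have lt_zy : ((f (zeros n)).1 < (f y).1)%N by rewrite f_zeros f_y.
apply: nmuar_pool_pair; rewrite HVC_pair_l // HVC_pair_r // f_zeros f_y /=.
by move: zeros_wins; rewrite !natrB //; lra.
Qed.

Hypothesis f_flip_zeros : forall i,
  f (flip (zeros n) i) = (1, n - 1)%N \/ dominates (0, n)%N (f (flip (zeros n) i)).

Lemma step_mass_trapped Q :
  trapped Q -> \sum_(P | trapped P) step f r1 r2 Q P = 1.
Proof.
move=> Q_trapped; have [zeros_Q _] := mem_trapped Q_trapped.
rewrite exchange_big /=; under eq_bigr do rewrite -mulr_sumr.
rewrite (sum_nmuar_sel_pool1 _ zeros_Q) ?nmuar_pool_trapped // exchange_big /=.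
under eq_bigr => i _.
  rewrite -mulr_sumr (bigD1 (update f Q (flip (zeros n) i))) ?update_trapped //=.
  rewrite eqxx big1 ?addr0 => [|P /andP[_ /negbTE P_neq]]; last by rewrite eq_sym P_neq.
  over.
by rewrite sumr_const card_ord -mulrnAr mulr1n div1r mulVf // pnatr_eq0 -lt0n.
Qed.

Lemma stagnates_of_trapped w :
  w \in pareto_set f -> f w != (0, n)%N -> f w != (1, n - 1)%N ->
  stagnates_with_pos_prob f r1 r2.
Proof.
move=> w_pareto w_neq0 w_neq1; apply: (stagnates_of_absorbing (S := trapped)).
- by move=> P; apply: trapped_uncovered w_pareto w_neq0 w_neq1.
- exact: step_mass_trapped.
rewrite (bigD1 [set zeros n]) /=; last by rewrite /trapped eqxx.
rewrite init_set1 ltr_wpDr ?sumr_ge0 // => [P _|]; first exact: init_ge0.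
by rewrite div1r invr_gt0 ltr0n expn_gt0.
Qed.

End Trap.

Definition allones n : bs n := [ffun => true].

Lemma flip_zeros n (i j : 'I_n) : flip (zeros n) i j = (j == i).
Proof. by rewrite !ffunE; case: eqP. Qed.

Lemma lexmax_in_pareto_set n (f : bs n -> obj) x :
  (forall y, (f y).1 <= (f x).1)%N ->
  (forall y, (f y).1 = (f x).1 -> (f y).2 <= (f x).2)%N ->
  x \in pareto_set f.
Proof.
move=> max1 max2; rewrite inE; apply/forallP => y; apply/negP.
case/and3P => le1 _ /orP[lt1 | lt2].
  by have := max1 y; rewrite leqNgt lt1.
have /max2 := anti_leq (andb_true_intro (conj (max1 y) le1)).
by rewrite leqNgt lt2.
Qed.

Section OneMinMax.

Variable n : nat.

Lemma ones_le (x : bs n) : (ones x <= n)%N.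
Proof.
rewrite -[leqRHS]card_ord -sum1_card; apply: leq_sum => i _; exact: leq_b1.
Qed.

Lemma ones_zeros : ones (zeros n) = 0%N.
Proof. by rewrite /ones big1 // => i _; rewrite ffunE. Qed.

Lemma ones_allones : ones (allones n) = n.
Proof.
by rewrite /ones (eq_bigr (fun=> 1%N)) ?sum1_card ?card_ord // => i _; rewrite ffunE.
Qed.

Lemma ones_flip_zeros i : ones (flip (zeros n) i) = 1%N.
Proof.
rewrite /ones (bigD1 i) //= flip_zeros eqxx big1 // => j /negbTE j_neq_i.
by rewrite flip_zeros j_neq_i.
Qed.

Lemma OneMinMax_stagnates (r1 r2 : rat) :
  (2 <= n)%N -> (n - 1)%N%:R - r2 < - r1 ->
  stagnates_with_pos_prob (@OneMinMax n) r1 r2.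
Proof.
move=> n_ge2 zeros_wins.
have allones_pareto : allones n \in pareto_set (@OneMinMax n).
  apply: lexmax_in_pareto_set => y; rewrite /OneMinMax /= ones_allones ?ones_le //.
  by move=> ->; rewrite subnn.
apply: (stagnates_of_trapped _ _ zeros_wins _ allones_pareto).
- exact: ltnW.
- by rewrite /OneMinMax ones_zeros subn0.
- by move=> i; left; rewrite /OneMinMax ones_flip_zeros.
- by rewrite /OneMinMax ones_allones subnn; apply/eqP => -[]; lia.
- by rewrite /OneMinMax ones_allones subnn; apply/eqP => -[]; lia.
Qed.

End OneMinMax.

Section LeadingOnesTrailingZeros.

Variable n : nat.
Implicit Type x : bs n.

Lemma LO_le_n x : (LO x <= n)%N.
Proof. by apply/bigmax_leqP => k _; rewrite -ltnS. Qed.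

Lemma TZ_le_n x : (TZ x <= n)%N.
Proof. by apply/bigmax_leqP => k _; rewrite -ltnS. Qed.

Lemma LO_le_unset x (j : 'I_n) : ~~ x j -> (LO x <= j)%N.
Proof.
move=> x_j; apply/bigmax_leqP => k /forallP/(_ j)/implyP.
by case: leqP => // _ /(_ isT); rewrite (negbTE x_j).
Qed.

Lemma TZ_le_set x (j : 'I_n) : x j -> (TZ x <= n - j.+1)%N.
Proof.
move=> x_j; apply/bigmax_leqP => k /forallP/(_ j)/implyP; rewrite x_j.
by case: leqP => [_ /(_ isT) | lt_jk _] //; lia.
Qed.

Lemma LO_ge x k : (k <= n)%N -> (forall j : 'I_n, j < k -> x j)%N -> (k <= LO x)%N.
Proof.
rewrite -ltnS => lt_kn ones_k.
apply: (leq_bigmax_cond (Ordinal lt_kn)).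
by apply/forallP => j; apply/implyP; apply: ones_k.
Qed.

Lemma TZ_ge x k :
  (k <= n)%N -> (forall j : 'I_n, n - k <= j -> ~~ x j)%N -> (k <= TZ x)%N.
Proof.
rewrite -ltnS => lt_kn zeros_k.
apply: (leq_bigmax_cond (Ordinal lt_kn)).
by apply/forallP => j; apply/implyP; apply: zeros_k.
Qed.

Hypothesis n_gt0 : (0 < n)%N.

Let j0 : 'I_n := Ordinal n_gt0.
Let lt_pred_n : (n.-1 < n)%N. Proof. by rewrite ltn_predL. Qed.
Let jlast : 'I_n := Ordinal lt_pred_n.

Lemma LOTZ_zeros : LOTZ (zeros n) = (0, n)%N.
Proof.
congr pair; first by apply/eqP; rewrite -leqn0 (LO_le_unset (j := j0)) ?ffunE.
by apply/eqP; rewrite eqn_leq TZ_le_n TZ_ge // => j _; rewrite ffunE.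
Qed.

Lemma LOTZ_allones : LOTZ (allones n) = (n, 0)%N.
Proof.
congr pair; first by apply/eqP; rewrite eqn_leq LO_le_n LO_ge // => j _; rewrite ffunE.
by apply/eqP; rewrite -leqn0 (leq_trans (TZ_le_set (j := jlast) _)) ?ffunE //=; lia.
Qed.

Lemma LOTZ_flip_zeros i : (2 <= n)%N ->
  LOTZ (flip (zeros n) i) = (1, n - 1)%N \/
  dominates (0, n)%N (LOTZ (flip (zeros n) i)).
Proof.
move=> n_ge2; case: (eqVneq i j0) => [-> | i_neq0]; [left | right].
  congr pair; apply/eqP; rewrite eqn_leq.
    rewrite (LO_le_unset (j := Ordinal n_ge2)) ?flip_zeros //= LO_ge // => j.
    by rewrite ltnS leqn0 flip_zeros => /eqP j_eq0; apply/eqP/val_inj.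
  rewrite (TZ_le_set (j := j0)) ?flip_zeros //= TZ_ge ?leq_subr // => j.
  by rewrite flip_zeros; apply: contraTN => /eqP-> /=; lia.
have LO_0 : (LO (flip (zeros n) i) <= 0)%N.
  by rewrite (LO_le_unset (j := j0)) // flip_zeros eq_sym.
have TZ_lt : (TZ (flip (zeros n) i) <= n - i.+1)%N by rewrite TZ_le_set ?flip_zeros.
rewrite /dominates /= LO_0 TZ_le_n /=; lia.
Qed.

Lemma LOTZ_allones_pareto : allones n \in pareto_set (@LOTZ n).
Proof.
apply: lexmax_in_pareto_set => y; rewrite LOTZ_allones ?LO_le_n //= => LO_n.
case: (boolP (y jlast)) => [y_last | /LO_le_unset].
  by rewrite (leq_trans (TZ_le_set y_last)) //=; lia.
by rewrite LO_n /=; lia.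
Qed.

End LeadingOnesTrailingZeros.

Lemma LOTZ_stagnates n (r1 r2 : rat) :
  (2 <= n)%N -> (n - 1)%N%:R - r2 < - r1 ->
  stagnates_with_pos_prob (@LOTZ n) r1 r2.
Proof.
move=> n_ge2 zeros_wins; have n_gt0 := ltnW n_ge2.
apply: (stagnates_of_trapped n_gt0 (LOTZ_zeros n_gt0) zeros_wins _
  (LOTZ_allones_pareto n_gt0)).
- by move=> i; apply: LOTZ_flip_zeros.
- by rewrite LOTZ_allones //; apply/eqP => -[]; lia.
- by rewrite LOTZ_allones //; apply/eqP => -[]; lia.
Qed.

Theorem theorem10 : forall n : nat, (2 <= n)%N ->
  exists r1 r2 : rat, r1 <= -1 /\ r2 <= -1 /\
    stagnates_with_pos_prob (@OneMinMax n) r1 r2 /\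
    stagnates_with_pos_prob (@LOTZ n) r1 r2.
Proof.
move=> n n_ge2; exists (- n.+1%:R), (-1).
have zeros_wins : (n - 1)%N%:R - (-1) < - (- n.+1%:R) :> rat.
  by rewrite natrB ?(ltnW n_ge2) // -natr1; lra.
split; first by rewrite lerN2 ler1n.
by split=> //; split; [apply: OneMinMax_stagnates | apply: LOTZ_stagnates].
Qed.
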